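(* The map $D:\mathbb{Q}^{\mathscr{P}}\to\mathbb{Q}^{\mathscr{P}}$, $Df=S_2f-S_2\odot f$, is linear, satisfies the Leibniz rule $D(f\odot g)=(Df)\odot g+f\odot(Dg)$, and satisfies $D\langle f\rangle_q=\langle Df\rangle_q$ for all $f\in\mathbb{Q}^{\mathscr{P}}$, where on the left $D=q\frac{d}{dq}$.
   Context: $\mathscr{P}$ is the set of partitions $\lambda=(\lambda_1\ge\lambda_2\ge\dots)$, $|\lambda|=\sum\lambda_i$; $\mathbb{Q}^{\mathscr{P}}$ the functions $\mathscr{P}\to\mathbb{Q}$. $\langle f\rangle_q=\frac{\sum_\lambda f(\lambda)q^{|\lambda|}}{\sum_\lambda q^{|\lambda|}}$. $S_2(\lambda)=-\frac1{24}+\sum_i\lambda_i$ and $S_2f$ is the pointwise product. Induced product: with $u_\lambda=\prod_{i:\lambda_i>0}u_{\lambda_i}$ and $\langle f\rangle_{\vec u}=\frac{\sum_\lambda f(\lambda)u_\lambda}{\sum_\lambda u_\lambda}\in\mathbb{Q}[[u_1,u_2,\dots]]$ (a linear bijection in $f$), $f\odot g$ is defined by $\langle f\odot g\rangle_{\vec u}=\langle f\rangle_{\vec u}\langle g\rangle_{\vec u}$. *)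

From HB Require Import structures.
From mathcomp Require Import all_boot all_order all_algebra.
Set Implicit Arguments. Unset Strict Implicit. Unset Printing Implicit Defensive.
Import Order.TTheory GRing.Theory Num.Theory.
Local Open Scope ring_scope.

Definition is_part (s : seq nat) : bool := sorted geq s && all (fun x => 0 < x)%N s.

Record ptn := Ptn { pval :> seq nat ; pvalP : is_part pval }.
HB.instance Definition _ := [isSub for pval].
HB.instance Definition _ := [Equality of ptn by <:].

Definition psize (l : ptn) : nat := sumn l.

Fixpoint allseqs (k n : nat) : seq (seq nat) :=
  match k with
  | 0 => [:: [::]]
  | k'.+1 => flatten [seq [seq x :: s | s <- allseqs k' n] | x <- iota 1 n]
  end.

Definition parts_of (n : nat) : seq ptn :=
  pmap (insub : seq nat -> option ptn)
    [seq s <- flatten [seq allseqs k n | k <- iota 0 n.+1] | sumn s == n].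

(** Q[[u_1,u_2,...]]: the monomial u_lambda = prod_i u_{lambda_i} is indexed by
    the ptn lambda, so a formal power series is its coefficient function
    ptn -> rat.  Product (u_a * u_b = u_{a ⊎ b}): *)
Definition umul (A B : ptn -> rat) (l : ptn) : rat :=
  \sum_(k < (psize l).+1) \sum_(a <- parts_of k) \sum_(b <- parts_of (psize l - k))
     (if perm_eq (pval a ++ pval b) (pval l) then A a * B b else 0).

(** sum_lambda u_lambda = prod_i 1/(1-u_i) and its inverse prod_i (1 - u_i) *)
Definition uZ : ptn -> rat := fun _ => 1.
Definition uZinv (l : ptn) : rat :=
  if uniq (pval l) then (-1) ^+ size (pval l) else 0.

(** <f>_u = (sum_lambda f(lambda) u_lambda) / (sum_lambda u_lambda) *)
Definition ubracket (f : ptn -> rat) : ptn -> rat := umul f uZinv.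

(** induced product: <f ⊙ g>_u = <f>_u <g>_u, i.e. f ⊙ g = (<f>_u <g>_u) * Z *)
Definition odot (f g : ptn -> rat) : ptn -> rat :=
  umul (umul (ubracket f) (ubracket g)) uZ.

Definition S2 (l : ptn) : rat := - (24%:R)^-1 + (psize l)%:R.

Definition Dop (f : ptn -> rat) : ptn -> rat :=
  fun l => S2 l * f l - odot S2 f l.

(** Formal power series in one variable q: coefficient functions nat -> rat. *)
Definition qmul (a b : nat -> rat) (n : nat) : rat :=
  \sum_(i < n.+1) a i * b (n - i)%N.

(** first n+1 coefficients of the inverse series 1/a (a 0 <> 0) *)
Fixpoint qinv_seq (a : nat -> rat) (n : nat) : seq rat :=
  match n with
  | 0 => [:: (a 0%N)^-1]
  | n'.+1 => let s := qinv_seq a n' in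
      rcons s (- (a 0%N)^-1 * \sum_(1 <= k < n.+1) a k * nth 0 s (n - k)%N)
  end.
Definition qinv (a : nat -> rat) (n : nat) : rat := nth 0 (qinv_seq a n) n.
Definition qdiv (a b : nat -> rat) : nat -> rat := qmul a (qinv b).

Definition qsum (f : ptn -> rat) (n : nat) : rat := \sum_(l <- parts_of n) f l.

Definition qbracket (f : ptn -> rat) : nat -> rat :=
  qdiv (qsum f) (qsum (fun _ => 1)).

Definition qD (a : nat -> rat) : nat -> rat := fun n => n%:R * a n.

(* Read f : ptn -> rat as the series sum_l f(l) u_l in Q[[u_1,u_2,...]], whose
   product [umul] is convolution over the monoid of partitions under union
   ([pcat]).  Multiplying the coefficient of u_l by |l| is a derivation E, and
   with Z = sum_l u_l and I = prod_i (1 - u_i) = 1/Z we have <f>_u = f I,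
   S_2 = -Z/24 + E Z and D f = -f/24 + E f - (S_2 I) (f I) Z.  A computation
   valid in any commutative ring then gives <D f>_u = E <f>_u.  The Leibniz rule
   follows because <f ⊙ g>_u = <f>_u <g>_u and f |-> <f>_u is injective, and
   linearity because E kills constants.  Finally u_i |-> q^i is a ring morphism
   sending E to q d/dq and <f>_u to <f>_q. *)

From HB Require Import structures.
From mathcomp Require Import all_boot all_order all_algebra.
From mathcomp Require Import zify ring.
From mathcomp.classical Require Import boolp functions.
Set Implicit Arguments. Unset Strict Implicit. Unset Printing Implicit Defensive.
Import GRing.Theory.
Local Open Scope ring_scope.

Lemma big_pred1_uniq (T : eqType) (V : nmodType) (r : seq T) (x : T) (F : T -> V) :
  uniq r -> \sum_(y <- r) (if y == x then F y else 0) = if x \in r then F x else 0.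
Proof.
move=> ur; rewrite -big_mkcond; case: ifP => xr.
  by rewrite -big_filter filter_pred1_uniq // big_seq1.
by rewrite big1_seq // => y /andP[/eqP -> yr]; rewrite yr in xr.
Qed.

Lemma big_uniq_filter (T : eqType) (V : nmodType) (r1 r2 : seq T) (P : pred T)
    (F : T -> V) :
  uniq r1 -> uniq r2 -> r1 =i [pred x in r2 | P x] ->
  \sum_(x <- r1) F x = \sum_(x <- r2 | P x) F x.
Proof.
move=> u1 u2 r12; rewrite -[RHS]big_filter; apply: perm_big.
by apply: uniq_perm; rewrite ?filter_uniq // => x; rewrite mem_filter andbC r12.
Qed.

Lemma uniq_flatten_fibers (I T : eqType) (g : T -> I) (F : I -> seq T) (s : seq I) :
  uniq s -> (forall i, uniq (F i)) -> (forall i x, x \in F i -> g x = i) ->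
  uniq (flatten [seq F i | i <- s]).
Proof.
move=> + uF gF; elim: s => //= i s IH /andP[i_s s_u].
rewrite cat_uniq uF IH // andbT; apply/hasPn => x /flatten_mapP[j js xj].
by apply: contraNN i_s => xi; rewrite -(gF _ _ xi) (gF _ _ xj).
Qed.

Section BracketDerivation.
Variables (R : comPzRingType) (E : {additive R -> R}).
Hypothesis EM : forall x y, E (x * y) = E x * y + x * E y.
Variables (Z I : R).
Hypothesis IZ : I * Z = 1.

Lemma derivation1 : E 1 = 0.
Proof.
have := EM 1 1; rewrite !mulr1 mul1r => E1.
by apply: (addIr (E 1)); rewrite add0r -E1.
Qed.

Lemma derivationV : E I = - (I * I * E Z).
Proof.
have EIZ : E I * Z + I * E Z = 0 by rewrite -EM IZ derivation1.
apply/eqP; rewrite -subr_eq0 opprK.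
have -> : E I + I * I * E Z = I * (E I * Z + I * E Z) + E I * (1 - I * Z) by ring.
by rewrite EIZ IZ subrr !mulr0 add0r.
Qed.

Definition bracket (x : R) : R := x * I.

Definition induced (x y : R) : R := bracket x * bracket y * Z.

Lemma bracket_inj : injective bracket.
Proof. by move=> x y /(congr1 ( *%R^~ Z)); rewrite -!mulrA IZ !mulr1. Qed.

Lemma bracketD x y : bracket (x + y) = bracket x + bracket y.
Proof. exact: mulrDl. Qed.

Lemma bracket_induced x y : bracket (induced x y) = bracket x * bracket y.
Proof. by rewrite /induced [LHS]/bracket -mulrA [Z * I]mulrC IZ mulr1. Qed.

Variable k : R.

(* D for S_2 = k Z + E Z: when Z has all coefficients 1, multiplying
   pointwise by S_2 is x |-> k x + E x. *)
Definition Dk (x : R) : R := k * x + E x - induced (k * Z + E Z) x.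

Lemma bracket_Dk x : bracket (Dk x) = E (bracket x).
Proof.
rewrite /Dk /induced /bracket EM derivationV.
(* The two sides differ by a multiple of I Z - 1. *)
transitivity (E x * I + x * - (I * I * E Z) +
  (1 - I * Z) * (k * x * I * (1 + I * Z) + x * I * I * E Z)); first by ring.
by rewrite IZ subrr mul0r addr0.
Qed.

Lemma Dk_induced x y : Dk (induced x y) = induced (Dk x) y + induced x (Dk y).
Proof.
apply: bracket_inj.
by rewrite bracketD !bracket_induced !bracket_Dk bracket_induced EM.
Qed.

Lemma Dk_linear c d x y : E c = 0 -> E d = 0 ->
  Dk (c * x + d * y) = c * Dk x + d * Dk y.
Proof. by move=> Ec Ed; rewrite /Dk /induced /bracket raddfD !EM Ec Ed; ring. Qed.

End BracketDerivation.

Lemma mem_allseqs k n s :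
  (s \in allseqs k n) = (size s == k) && all (fun x => 0 < x <= n)%N s.
Proof.
elim: k s => [|k IH] [|x t] //=.
- by apply/flatten_mapP => -[y _ /mapP[u _]].
- apply/flatten_mapP/idP.
  + move=> [y]; rewrite mem_iota => /andP[y1 yn] /mapP[u uin [-> ->]].
    move: uin; rewrite IH => /andP[/eqP -> ->]; rewrite eqxx y1 /=.
    by move: yn; rewrite add1n ltnS => ->.
  + move=> /andP[sz /andP[xb tall]]; exists x; first by rewrite mem_iota add1n ltnS.
    by apply/mapP; exists t => //; rewrite IH -(eqn_add2r 1) !addn1 sz.
Qed.

Lemma uniq_allseqs k n : uniq (allseqs k n).
Proof.
elim: k => [|k IH] //=; apply: allpairs_uniq => //; first exact: iota_uniq.
by move=> [a b] [c d] _ _ /= [-> ->].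
Qed.

Lemma ptn_gt0 (l : ptn) : all (fun x => 0 < x)%N l.
Proof. by case: l => s /= /andP[]. Qed.

Lemma ptn_sorted (l : ptn) : sorted geq l.
Proof. by case: l => s /= /andP[]. Qed.

Lemma mem_parts_of k (l : ptn) : (l \in parts_of k) = (psize l == k).
Proof.
rewrite /parts_of mem_pmap_sub mem_filter -[\val l]/(pval l) /psize; case: eqP => // <-.
have l_gt0 := ptn_gt0 l; apply/flatten_mapP; exists (size l).
  rewrite mem_iota add0n ltnS; elim: (pval l) l_gt0 => //= x s IH /andP[x0 /IH]; lia.
rewrite mem_allseqs eqxx /=; apply/allP => x xl; rewrite (allP l_gt0) //=.
by move/perm_to_rem/perm_sumn: xl => /= ->; rewrite leq_addr.
Qed.

Lemma uniq_parts_of k : uniq (parts_of k).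
Proof.
apply/pmap_sub_uniq/filter_uniq; apply: (uniq_flatten_fibers (g := size)).
- exact: iota_uniq.
- by move=> j; apply: uniq_allseqs.
- by move=> j s; rewrite mem_allseqs => /andP[/eqP].
Qed.

Definition ptns_upto (N : nat) : seq ptn := flatten [seq parts_of k | k <- iota 0 N.+1].

Lemma mem_ptns_upto N (l : ptn) : (l \in ptns_upto N) = (psize l <= N)%N.
Proof.
apply/flatten_mapP/idP => [[k]|lN]; first by rewrite mem_iota mem_parts_of => kN /eqP ->.
by exists (psize l); rewrite ?mem_iota ?mem_parts_of.
Qed.

Lemma uniq_ptns_upto N : uniq (ptns_upto N).
Proof.
apply: (uniq_flatten_fibers (g := psize)).
- exact: iota_uniq.
- by move=> j; apply: uniq_parts_of.
- by move=> j l; rewrite mem_parts_of => /eqP.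
Qed.

Lemma sum_parts_of N k (F : ptn -> rat) : (k <= N)%N ->
  \sum_(b <- parts_of k) F b = \sum_(b <- ptns_upto N | psize b == k) F b.
Proof.
move=> kN; apply: big_uniq_filter; rewrite ?uniq_parts_of ?uniq_ptns_upto // => b.
by rewrite inE mem_parts_of mem_ptns_upto; case: eqP => [->|_]; rewrite ?kN ?andbF.
Qed.

Lemma sum_ptns_upto_widen M N (F : ptn -> rat) : (M <= N)%N ->
  \sum_(a <- ptns_upto M) F a = \sum_(a <- ptns_upto N | (psize a <= M)%N) F a.
Proof.
move=> MN; apply: big_uniq_filter; rewrite ?uniq_ptns_upto // => a.
by rewrite inE !mem_ptns_upto; case: leqP => aM; rewrite ?andbF ?(leq_trans aM MN).
Qed.

Lemma sum_parts_of_ord M (H : nat -> ptn -> rat) :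
  \sum_(k < M.+1) \sum_(a <- parts_of k) H k a = \sum_(a <- ptns_upto M) H (psize a) a.
Proof.
rewrite -(big_mkord xpredT (fun k => \sum_(a <- parts_of k) H k a)) big_flatten big_map.
apply: eq_bigr => k _; rewrite big_seq [RHS]big_seq.
by apply: eq_bigr => a; rewrite mem_parts_of => /eqP ->.
Qed.

Lemma geq_total : total geq.
Proof. by move=> m n; rewrite /= leq_total. Qed.

Lemma geq_trans : transitive geq.
Proof. by move=> m n p /= nm pn; rewrite (leq_trans pn nm). Qed.

Lemma geq_anti : antisymmetric geq.
Proof. by move=> m n /= /andP[nm mn]; apply/eqP; rewrite eqn_leq mn nm. Qed.

Lemma is_part_sort s : is_part (sort geq [seq x <- s | (0 < x)%N]).
Proof.
rewrite /is_part (sort_sorted geq_total) all_sort.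
by apply/allP => x; rewrite mem_filter => /andP[].
Qed.

Definition ptn_of (s : seq nat) : ptn := Ptn (is_part_sort s).

Definition ptn0 : ptn := @Ptn [::] isT.

Lemma ptn_ofK (l : ptn) : ptn_of l = l.
Proof.
apply: val_inj; rewrite /= (all_filterP (ptn_gt0 l)).
exact/sorted_sort/ptn_sorted/geq_trans.
Qed.

Lemma ptn_of_perm s t : perm_eq s t -> ptn_of s = ptn_of t.
Proof.
move=> st; apply: val_inj => /=; apply/perm_sortP.
- exact: geq_total.
- exact: geq_trans.
- exact: geq_anti.
- exact: perm_filter.
Qed.

Lemma perm_ptn_of s : all (fun x => 0 < x)%N s -> perm_eq (ptn_of s) s.
Proof. by move=> s_gt0; rewrite /= perm_sort (all_filterP s_gt0). Qed.

Lemma perm_eq_ptn_of s (l : ptn) :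
  all (fun x => 0 < x)%N s -> perm_eq s l = (ptn_of s == l).
Proof.
move=> s_gt0; apply/idP/eqP => [/ptn_of_perm ->|<-]; first exact: ptn_ofK.
by rewrite perm_sym perm_ptn_of.
Qed.

Lemma psize_ptn_of s : all (fun x => 0 < x)%N s -> psize (ptn_of s) = sumn s.
Proof. by move/perm_ptn_of/perm_sumn. Qed.

Lemma psize_eq0 (l : ptn) : (psize l == 0%N) = (l == ptn0).
Proof.
apply/eqP/eqP => [|-> //]; case: l => -[|x s] l_part; first by move=> _; apply: val_inj.
by have /andP[_ /andP[x_gt0 _]] := l_part; rewrite /psize /=; lia.
Qed.

Definition pcat (a b : ptn) : ptn := ptn_of (a ++ b).

Lemma all_cat_gt0 (a b : ptn) : all (fun x => 0 < x)%N (a ++ b).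
Proof. by rewrite all_cat !ptn_gt0. Qed.

Lemma perm_pcat (a b : ptn) : perm_eq (pcat a b) (a ++ b).
Proof. exact/perm_ptn_of/all_cat_gt0. Qed.

Lemma perm_eq_pcat (a b l : ptn) : perm_eq (a ++ b) l = (pcat a b == l).
Proof. exact/perm_eq_ptn_of/all_cat_gt0. Qed.

Lemma psize_pcat (a b : ptn) : psize (pcat a b) = (psize a + psize b)%N.
Proof. by rewrite /psize (perm_sumn (perm_pcat a b)) sumn_cat. Qed.

Lemma mem_pcat (a b : ptn) m :
  (m \in (pcat a b : seq nat)) = (m \in (a : seq nat)) || (m \in (b : seq nat)).
Proof. by rewrite (perm_mem (perm_pcat a b)) mem_cat. Qed.

Lemma pcatC (a b : ptn) : pcat a b = pcat b a.
Proof. by apply: ptn_of_perm; rewrite perm_catC. Qed.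

Lemma pcatA (a b c : ptn) : pcat (pcat a b) c = pcat a (pcat b c).
Proof.
apply: ptn_of_perm; apply: perm_trans (perm_cat (perm_pcat a b) (perm_refl c)) _.
by rewrite -catA perm_cat2l perm_sym perm_pcat.
Qed.

Lemma pcat0p (b : ptn) : pcat ptn0 b = b.
Proof. exact: ptn_ofK. Qed.

Lemma umulE N (A B : ptn -> rat) (l : ptn) : (psize l <= N)%N ->
  umul A B l = \sum_(a <- ptns_upto N) \sum_(b <- ptns_upto N)
                 (if pcat a b == l then A a * B b else 0).
Proof.
move=> lN; rewrite /umul (sum_parts_of_ord _ (fun k a =>
  \sum_(b <- parts_of (psize l - k)) if perm_eq (a ++ b) l then A a * B b else 0)).
rewrite (sum_ptns_upto_widen _ lN) big_mkcond; apply: eq_bigr => a _.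
case: leqP => al.
  rewrite (sum_parts_of (N := N)) ?big_mkcond; last by rewrite (leq_trans (leq_subr _ _)).
  apply: eq_bigr => b _; rewrite perm_eq_pcat.
  case: (pcat a b =P l) => [<-|_]; last by case: ifP.
  by rewrite psize_pcat addKn eqxx.
symmetry; rewrite big1 // => b _; case: eqP => // lab.
by move: al; rewrite -lab psize_pcat; lia.
Qed.

Lemma umul_umulE N (A B C : ptn -> rat) (l : ptn) : (psize l <= N)%N ->
  umul (umul A B) C l = \sum_(a <- ptns_upto N) \sum_(b <- ptns_upto N)
    \sum_(c <- ptns_upto N) (if pcat (pcat a b) c == l then A a * B b * C c else 0).
Proof.
move=> lN; rewrite (umulE _ _ lN).
transitivity (\sum_(d <- ptns_upto N) \sum_(c <- ptns_upto N) \sum_(a <- ptns_upto N)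
  \sum_(b <- ptns_upto N)
    (if d == pcat a b then if pcat d c == l then A a * B b * C c else 0 else 0)).
  rewrite big_seq [RHS]big_seq; apply: eq_bigr => d; rewrite mem_ptns_upto => dN.
  apply: eq_bigr => c _; case: (pcat d c =P l) => _; last first.
    by rewrite big1 // => a _; rewrite big1 // => b _; case: ifP.
  rewrite (umulE _ _ dN) mulr_suml; apply: eq_bigr => a _.
  by rewrite mulr_suml; apply: eq_bigr => b _; rewrite eq_sym; case: eqP; rewrite ?mul0r.
rewrite exchange_big; under eq_bigr do rewrite exchange_big.
under eq_bigr do under eq_bigr do rewrite exchange_big.
rewrite exchange_big; under eq_bigr do rewrite exchange_big.
apply: eq_bigr => a _; apply: eq_bigr => b _; apply: eq_bigr => c _.
rewrite big_pred1_uniq ?uniq_ptns_upto // mem_ptns_upto; case: leqP => // abN.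
by case: eqP => // abcl; move: lN abN; rewrite -abcl !psize_pcat; lia.
Qed.

Lemma umulC (A B : ptn -> rat) (l : ptn) : umul A B l = umul B A l.
Proof.
rewrite !(umulE _ _ (leqnn (psize l))) exchange_big; apply: eq_bigr => a _.
by apply: eq_bigr => b _; rewrite pcatC mulrC.
Qed.

Lemma umulA (A B C : ptn -> rat) (l : ptn) :
  umul (umul A B) C l = umul A (umul B C) l.
Proof.
have lN := leqnn (psize l).
rewrite [RHS]umulC !(umul_umulE _ _ _ lN); symmetry.
rewrite exchange_big; under eq_bigr do rewrite exchange_big.
rewrite exchange_big; under eq_bigr do rewrite exchange_big.
apply: eq_bigr => a _; apply: eq_bigr => b _; apply: eq_bigr => c _.
by rewrite pcatC pcatA mulrC !mulrA.
Qed.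

Lemma umulDl (A B C : ptn -> rat) (l : ptn) :
  umul (fun x => A x + B x) C l = umul A C l + umul B C l.
Proof.
rewrite !(umulE _ _ (leqnn (psize l))) -big_split; apply: eq_bigr => a _.
by rewrite -big_split; apply: eq_bigr => b _; case: ifP; rewrite ?addr0 // mulrDl.
Qed.

Lemma umul_monomial (x : ptn) (c : rat) (A : ptn -> rat) (l : ptn) :
  umul (fun a => if a == x then c else 0) A l =
  c * \sum_(b <- ptns_upto (psize l)) (if pcat x b == l then A b else 0).
Proof.
rewrite (umulE _ _ (leqnn _)) (eq_bigr (fun a => if a == x then
  c * \sum_(b <- ptns_upto (psize l)) (if pcat x b == l then A b else 0) else 0)).
  rewrite big_pred1_uniq ?uniq_ptns_upto // mem_ptns_upto; case: leqP => // xl.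
  rewrite big1 ?mulr0 // => b _; case: eqP => // xbl.
  by move: xl; rewrite -xbl psize_pcat; lia.
move=> a _; case: eqP => [->|_]; last by rewrite big1 // => b _; case: ifP; rewrite ?mul0r.
by rewrite mulr_sumr; apply: eq_bigr => b _; case: ifP; rewrite ?mulr0.
Qed.

(* An alias: the canonical ring structure on [ptn -> rat] is the pointwise one. *)
Definition useries := ptn -> rat.
HB.instance Definition _ := GRing.Zmodule.on useries.

Definition uconst (c : rat) : useries := fun l => if l == ptn0 then c else 0.

Lemma umul_const (c : rat) (A : ptn -> rat) (l : ptn) : umul (uconst c) A l = c * A l.
Proof.
rewrite umul_monomial; under eq_bigr do rewrite pcat0p.
by rewrite big_pred1_uniq ?uniq_ptns_upto // mem_ptns_upto leqnn.
Qed.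

Lemma useries_mulA : associative (umul : useries -> useries -> useries).
Proof. by move=> A B C; apply/funext => l; rewrite umulA. Qed.

Lemma useries_mulC : commutative (umul : useries -> useries -> useries).
Proof. by move=> A B; apply/funext => l; apply: umulC. Qed.

Lemma useries_mul1 : left_id (uconst 1 : useries) umul.
Proof. by move=> A; apply/funext => l; rewrite umul_const mul1r. Qed.

Lemma useries_mulDl : left_distributive (umul : useries -> useries -> useries) +%R.
Proof. by move=> A B C; apply/funext => l; apply: umulDl. Qed.

HB.instance Definition _ := GRing.Zmodule_isComPzRing.Build useries
  useries_mulA useries_mulC useries_mul1 useries_mulDl.

Lemma useries_addE (A B : useries) l : (A + B) l = A l + B l.
Proof. by []. Qed.

Lemma useries_subE (A B : useries) l : (A - B) l = A l - B l.
Proof. by []. Qed.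

Lemma useries_mulE (A B : useries) l : (A * B) l = umul A B l.
Proof. by []. Qed.

Lemma useries_oneE l : (1 : useries) l = uconst 1 l.
Proof. by []. Qed.

Lemma umul_constE (c : rat) (f : useries) : uconst c * f = (fun l => c * f l).
Proof. by apply/funext => l; rewrite useries_mulE umul_const. Qed.

Definition ueuler (A : useries) : useries := fun l => (psize l)%:R * A l.

Lemma ueuler_is_zmod_morphism : zmod_morphism ueuler.
Proof. by move=> A B; apply/funext => l; rewrite /ueuler mulrBr. Qed.

HB.instance Definition _ :=
  GRing.isZmodMorphism.Build useries useries ueuler ueuler_is_zmod_morphism.

Lemma ueulerE (A : useries) l : ueuler A l = (psize l)%:R * A l.
Proof. by []. Qed.

Lemma ueuler_const c : ueuler (uconst c) = 0.
Proof.
by apply/funext => l; rewrite ueulerE /uconst; case: eqP => [->|_] /=; rewrite ?mul0r ?mulr0.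
Qed.

Lemma ueulerM (A B : useries) : ueuler (A * B) = ueuler A * B + A * ueuler B.
Proof.
apply/funext => l; rewrite ueulerE useries_addE !useries_mulE.
rewrite !(umulE _ _ (leqnn (psize l))) mulr_sumr -big_split; apply: eq_bigr => a _.
rewrite mulr_sumr -big_split; apply: eq_bigr => b _.
case: eqP => [<-|_] /=; last by rewrite mulr0 addr0.
by rewrite !ueulerE psize_pcat natrD; ring.
Qed.

Definition uvar (m : nat) : useries := fun a => if a == ptn_of [:: m] then 1 else 0.

Definition uavoid (m : nat) (A : useries) : useries :=
  fun l => if m \in (l : seq nat) then 0 else A l.

Lemma rem_ptn_gt0 m (l : ptn) : all (fun x => 0 < x)%N (rem m l).
Proof. by apply/allP => x /mem_rem; apply/allP/ptn_gt0. Qed.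

Lemma sumn_rem_leq m (s : seq nat) : (sumn (rem m s) <= sumn s)%N.
Proof. by elim: s => //= x s IH; case: eqP => _ /=; lia. Qed.

Lemma pcat_uvar m (b l : ptn) : (0 < m)%N ->
  (pcat (ptn_of [:: m]) b == l) = (m \in (l : seq nat)) && (b == ptn_of (rem m l)).
Proof.
move=> m_gt0; rewrite -perm_eq_pcat.
have -> : pval (ptn_of [:: m]) = [:: m] by rewrite /= m_gt0.
rewrite /= eq_sym -perm_eq_ptn_of ?rem_ptn_gt0 //; case ml: (m \in pval l) => /=.
  by rewrite (permPr (perm_to_rem ml)) perm_cons perm_sym.
by apply: contraFF ml => /perm_mem <-; rewrite mem_head.
Qed.

Lemma uvar_mul m (A : useries) (l : ptn) : (0 < m)%N ->
  (uvar m * A) l = if m \in (l : seq nat) then A (ptn_of (rem m l)) else 0.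
Proof.
move=> m_gt0; rewrite useries_mulE umul_monomial mul1r.
under eq_bigr do rewrite pcat_uvar //.
case: ifP => ml /=; last by rewrite big1.
rewrite big_pred1_uniq ?uniq_ptns_upto // mem_ptns_upto.
by rewrite psize_ptn_of ?rem_ptn_gt0 ?sumn_rem_leq.
Qed.

Lemma uZinv_ptn_of s : all (fun x => 0 < x)%N s ->
  uZinv (ptn_of s) = if uniq s then (-1) ^+ size s else 0.
Proof. by move/perm_ptn_of => ps; rewrite /uZinv (perm_uniq ps) (perm_size ps). Qed.

(* Both prod_i (1 - u_i) and Z = prod_i 1/(1 - u_i) split off their factor in
   u_m, leaving series supported on the partitions with no part m. *)
Lemma uZinv_factor m : (0 < m)%N -> (1 - uvar m) * uavoid m uZinv = uZinv.
Proof.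
move=> m_gt0; apply/funext => l; rewrite mulrBl mul1r useries_subE uvar_mul //.
rewrite /uavoid; case: ifP => ml; last by rewrite subr0.
have pl := perm_to_rem ml.
rewrite (perm_mem (perm_ptn_of (rem_ptn_gt0 m l))) uZinv_ptn_of ?rem_ptn_gt0 //.
rewrite /uZinv (perm_uniq pl) (perm_size pl) /=.
by case: (m \in rem m l) => /=; [|case: uniq]; rewrite ?exprS ?mulN1r sub0r ?oppr0.
Qed.

Lemma uZ_factor m : (0 < m)%N -> (1 - uvar m) * uZ = uavoid m uZ.
Proof.
move=> m_gt0; apply/funext => l; rewrite mulrBl mul1r useries_subE uvar_mul //.
by rewrite /uavoid /uZ; case: ifP; rewrite ?subrr ?subr0.
Qed.

Lemma uavoid_mul_mem m (A B : useries) (l : ptn) :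
  m \in (l : seq nat) -> (uavoid m A * uavoid m B) l = 0.
Proof.
move=> ml; rewrite useries_mulE (umulE _ _ (leqnn _)) big1 // => a _.
rewrite big1 // => b _; case: eqP => // lab; move: ml; rewrite -lab mem_pcat /uavoid.
by case/orP => ->; rewrite ?mul0r ?mulr0.
Qed.

Lemma umul_ptn0 (A B : useries) : (A * B) ptn0 = A ptn0 * B ptn0.
Proof.
have pcat_eq0 a b : (pcat a b == ptn0) = (a == ptn0) && (b == ptn0).
  by rewrite -!psize_eq0 psize_pcat addn_eq0.
rewrite useries_mulE (umulE _ _ (leqnn _)).
rewrite (eq_bigr (fun a => if a == ptn0 then
  \sum_(b <- ptns_upto 0) (if b == ptn0 then A a * B b else 0) else 0)) => [|a _].
  by rewrite !big_pred1_uniq ?uniq_ptns_upto // mem_ptns_upto.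
case: (eqVneq a ptn0) => [->|/negbTE a_neq0].
  by apply: eq_bigr => b _; rewrite pcat_eq0 eqxx.
by rewrite big1 // => b _; rewrite pcat_eq0 a_neq0.
Qed.

Lemma uZinvZ : (uZinv : useries) * uZ = 1.
Proof.
apply/funext => l; case: (eqVneq l ptn0) => [->|l_neq0].
  by rewrite umul_ptn0.
have [m ml m_gt0] : exists2 m, m \in (l : seq nat) & (0 < m)%N.
  case: l l_neq0 => -[|m s] l_part l_neq0; first by case/eqP: l_neq0; apply: val_inj.
  by exists m; rewrite ?mem_head //; have /andP[_ /andP[]] := l_part.
have -> : (uZinv : useries) * uZ = uavoid m uZinv * uavoid m uZ.
  by rewrite -uZ_factor // -{1}(uZinv_factor m_gt0); ring.
by rewrite uavoid_mul_mem // useries_oneE /uconst (negbTE l_neq0).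
Qed.

Lemma qsumM (A B : useries) n : qsum (A * B) n = qmul (qsum A) (qsum B) n.
Proof.
transitivity (\sum_(a <- ptns_upto n) \sum_(b <- ptns_upto n)
    (if (psize a + psize b == n)%N then A a * B b else 0)).
  rewrite /qsum (eq_big_seq (fun l => \sum_(a <- ptns_upto n) \sum_(b <- ptns_upto n)
    (if pcat a b == l then A a * B b else 0))) => [|l]; last first.
    by rewrite mem_parts_of => /eqP ln; apply: umulE; rewrite ln.
  rewrite exchange_big; apply: eq_bigr => a _; rewrite exchange_big; apply: eq_bigr => b _.
  under eq_bigr do rewrite eq_sym.
  by rewrite big_pred1_uniq ?uniq_parts_of // mem_parts_of psize_pcat.
rewrite /qmul (eq_bigr (fun i : 'I_n.+1 =>
  \sum_(a <- parts_of i) \sum_(b <- parts_of (n - i)) A a * B b)) => [|i _]; last first.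
  by rewrite /qsum mulr_suml; apply: eq_bigr => a _; rewrite mulr_sumr.
rewrite (sum_parts_of_ord _ (fun i a => \sum_(b <- parts_of (n - i)) A a * B b)).
rewrite big_seq [RHS]big_seq; apply: eq_bigr => a; rewrite mem_ptns_upto => an.
rewrite (sum_parts_of (N := n)) ?leq_subr // [RHS]big_mkcond; apply: eq_bigr => b _.
by case: eqP; case: eqP => //; lia.
Qed.

Lemma qsum1 n : qsum (1 : useries) n = (n == 0)%N%:R.
Proof. by rewrite /qsum big_pred1_uniq ?uniq_parts_of // mem_parts_of; case: n. Qed.

Lemma qD_qsum (A : ptn -> rat) n : qD (qsum A) n = qsum (ueuler A) n.
Proof.
rewrite /qD /qsum mulr_sumr; apply: eq_big_seq => l.
by rewrite mem_parts_of => /eqP <-.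
Qed.

Lemma size_qinv_seq a n : size (qinv_seq a n) = n.+1.
Proof. by elim: n => //= n IH; rewrite size_rcons IH. Qed.

Lemma nth_qinv_seq a n i : (i <= n)%N -> nth 0 (qinv_seq a n) i = qinv a i.
Proof.
elim: n => [|n IH]; first by rewrite leqn0 => /eqP ->.
rewrite leq_eqVlt => /predU1P[-> //|]; rewrite ltnS => i_le_n.
by rewrite /= nth_rcons size_qinv_seq ltnS i_le_n IH.
Qed.

Lemma qinvS a n :
  qinv a n.+1 = - (a 0%N)^-1 * \sum_(1 <= k < n.+2) a k * qinv a (n.+1 - k).
Proof.
rewrite /qinv /= nth_rcons size_qinv_seq ltnn eqxx; congr (_ * _).
by apply: eq_big_nat => k /andP[k_gt0 _]; rewrite nth_qinv_seq //; lia.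
Qed.

Lemma qinv_unique a c : (forall n, qmul a c n = (n == 0)%N%:R) -> qinv a =1 c.
Proof.
move=> ac n; have a0c0 : a 0%N * c 0%N = 1.
  by have := ac 0%N; rewrite /qmul big_ord1.
have a0_neq0 : a 0%N != 0 by apply: contra_eq_neq a0c0 => ->; rewrite mul0r.
elim/ltn_ind: n => -[_|n IH].
  by rewrite /qinv /= -[LHS]mulr1 -a0c0 mulrA mulVf ?mul1r.
have := ac n.+1; rewrite /qmul big_ord_recl subn0 /= => acS.
rewrite qinvS (eq_big_nat _ _ (F2 := fun k => a k * c (n.+1 - k)%N)); last first.
  by move=> k /andP[k_gt0 _]; rewrite IH //; lia.
rewrite big_add1 big_mkord /=.
move/eqP: acS; rewrite addrC addr_eq0 => /eqP ->.
by rewrite mulrNN mulrA mulVf ?mul1r.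
Qed.

Lemma qinv_qsum_uZ : qinv (qsum uZ) =1 qsum uZinv.
Proof. by apply: qinv_unique => n; rewrite -qsumM mulrC uZinvZ qsum1. Qed.

Lemma qbracketE (f : useries) : qbracket f = qsum (bracket (uZinv : useries) f).
Proof.
apply/funext => n; rewrite /bracket qsumM /qbracket /qdiv /qmul; apply: eq_bigr => i _.
by rewrite qinv_qsum_uZ.
Qed.

Lemma odotE (f g : useries) : odot f g = induced (uZ : useries) uZinv f g.
Proof. by []. Qed.

Lemma DopE (f : useries) : Dop f = Dk ueuler uZ uZinv (uconst (- 24%:R^-1)) f.
Proof.
have S2E : (S2 : useries) = uconst (- 24%:R^-1) * uZ + ueuler uZ.
  by apply/funext => l; rewrite useries_addE umul_constE ueulerE /uZ !mulr1.
apply/funext => l; rewrite /Dk -S2E useries_subE useries_addE useries_mulE umul_const.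
by rewrite /Dop /S2 mulrDl.
Qed.

Theorem proposition5p1p1 :
  (forall (a b : rat) (f g : ptn -> rat),
      Dop (fun l => a * f l + b * g l) =1 (fun l => a * Dop f l + b * Dop g l)) /\
  (forall f g : ptn -> rat,
      Dop (odot f g) =1 (fun l => odot (Dop f) g l + odot f (Dop g) l)) /\
  (forall f : ptn -> rat, qD (qbracket f) =1 qbracket (Dop f)).
Proof.
split; [|split].
- move=> a b f g l.
  have := Dk_linear ueulerM uZ uZinv (uconst (- 24%:R^-1)) f g
    (ueuler_const a) (ueuler_const b).
  by rewrite !umul_constE -!DopE => ->.
- by move=> f g; rewrite !odotE !DopE (Dk_induced ueulerM uZinvZ).
- move=> f n; rewrite !qbracketE qD_qsum DopE.
  by rewrite (bracket_Dk ueulerM uZinvZ).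
Qed.
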